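(* Let $(M,g)$ be a four-dimensional globally hyperbolic spacetime with an isometric embedding into a higher-dimensional Minkowski space as described in the context, and let $\Theta$ be a real constant skew-symmetric $4\times4$ matrix. To first order in $\Theta$, the deformed commutator of the coordinate functions is $$[x^\mu,x^\nu]_\Theta=2\mathrm{i}\,\Theta^{\mu\nu}(x),\qquad \Theta^{\mu\nu}(x)=\Theta^{\alpha\beta}J^\mu_{\ \alpha}(x)J^\nu_{\ \beta}(x),$$ where $J=\partial x/\partial X$ is the Jacobian of the map $X^\alpha\mapsto x^\mu(X)$; here $[x^\mu,x^\nu]_\Theta$ is computed as $\big(x_1^\mu\times_\Theta x_2^\nu-x_2^\nu\times_\Theta x_1^\mu\big)\big|_{x_1=x_2=x}$.
   Context: Fix an isometric embedding of $(M,g)$ into Minkowski space $\mathbb{L}^N$ with coordinates $(X^\mu,X^a)$, $\mu=0,\dots,3$, such that on the image $X^a=X^a(X^\mu)$ locally and the coordinates of $M$ are locally smooth invertible functions $x^\mu=x^\mu(X^\nu)$. The deformed product at two points is $f(x_1)\times_\Theta g(x_2)=\lim_{\epsilon\to0}\iint\chi(\epsilon X,\epsilon Y)f(X_1+\Theta X)g(X_2+Y)e^{-\mathrm{i}X\cdot Y}d^4Xd^4Y$, with $X_i$ the embedding point of $x_i$, $X\cdot Y$ the Minkowski product on $\mathbb{R}^4$, $\chi\in C_0^\infty(\mathbb{R}^4\times\mathbb{R}^4)$, $\chi(0,0)=1$. Equivalently, $f(x_1)\times_\Theta g(x_2)=\exp(\mathrm{i}\Theta^{\rho\sigma}(x_1,x_2)\partial_{x_1^\rho}\partial_{x_2^\sigma})f(x_1)g(x_2)$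 with $\Theta^{\rho\sigma}(x_1,x_2)=\Theta^{\mu\nu}J^\rho_{\ \mu}(x_1)J^\sigma_{\ \nu}(x_2)$. The deformed commutator is $[a,b]_\Theta=a\times_\Theta b-b\times_\Theta a$. *)

From HB Require Import structures.
From mathcomp Require Import all_boot all_order all_algebra.
From mathcomp Require Import complex.
From mathcomp Require Import all_classical all_reals all_analysis.
Set Implicit Arguments. Unset Strict Implicit. Unset Printing Implicit Defensive.
Import Order.TTheory GRing.Theory Num.Theory.
Import numFieldNormedType.Exports.
Local Open Scope ring_scope.
Local Open Scope complex_scope.

Section Defs.
Variables (R : realType) (k : nat).

(* Spacetime coordinates x^mu live in 'rV[R]_4 (a coordinate chart of M);
   the ambient Minkowski space L^N has N = 4 + k, with coordinates
   (X^mu, X^a), X^mu = components lshift k mu, X^a = components rshift 4 a. *)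

Definition minkN (u v : 'rV[R]_(4 + k)) : R :=
  - (u 0 0 * v 0 0) + \sum_(i < 4 + k | i != 0) u 0 i * v 0 i.

Definition pd (rho : 'I_4) (f : 'rV[R]_4 -> R) (x : 'rV[R]_4) : R :=
  'D_(delta_mx 0 rho) f x.

Definition xcoord (mu : 'I_4) : 'rV[R]_4 -> R := fun x => x 0 mu.

Definition Xpt (E : 'rV[R]_4 -> 'rV[R]_(4 + k)) (x : 'rV[R]_4) : 'rV[R]_4 :=
  \row_mu E x 0 (lshift k mu).

Definition pullback_metric (E : 'rV[R]_4 -> 'rV[R]_(4 + k)) (x : 'rV[R]_4)
  : 'M[R]_4 :=
  \matrix_(mu, nu) minkN ('D_(delta_mx 0 mu) E x) ('D_(delta_mx 0 nu) E x).

(* Jacobian J^mu_alpha(x) = d x^mu / d X^alpha of the map X |-> x(X) = phi X,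
   evaluated at the embedding point X(x). *)
Definition Jac (E : 'rV[R]_4 -> 'rV[R]_(4 + k)) (phi : 'rV[R]_4 -> 'rV[R]_4)
  (mu alpha : 'I_4) (x : 'rV[R]_4) : R :=
  'D_(delta_mx 0 alpha) (fun X => phi X 0 mu) (Xpt E x).

Definition Theta2 (E : 'rV[R]_4 -> 'rV[R]_(4 + k)) (phi : 'rV[R]_4 -> 'rV[R]_4)
  (Th : 'M[R]_4) (rho sigma : 'I_4) (x1 x2 : 'rV[R]_4) : R :=
  \sum_(mu < 4) \sum_(nu < 4) Th mu nu * Jac E phi rho mu x1 * Jac E phi sigma nu x2.

(* Deformed product f(x1) x_Theta g(x2) truncated at first order in Theta,
   i.e. the first two terms of exp(i Theta^{rs}(x1,x2) d_{x1^r} d_{x2^s}) f g. *)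
Definition star1 (E : 'rV[R]_4 -> 'rV[R]_(4 + k)) (phi : 'rV[R]_4 -> 'rV[R]_4)
  (Th : 'M[R]_4) (f g : 'rV[R]_4 -> R) (x1 x2 : 'rV[R]_4) : R[i] :=
  (f x1 * g x2)%:C
  + 'i * (\sum_(rho < 4) \sum_(sigma < 4)
            Theta2 E phi Th rho sigma x1 x2 * pd rho f x1 * pd sigma g x2)%:C.

Definition comm1 (E : 'rV[R]_4 -> 'rV[R]_(4 + k)) (phi : 'rV[R]_4 -> 'rV[R]_4)
  (Th : 'M[R]_4) (f g : 'rV[R]_4 -> R) (x : 'rV[R]_4) : R[i] :=
  star1 E phi Th f g x x - star1 E phi Th g f x x.

End Defs.

From HB Require Import structures.
From mathcomp Require Import all_boot all_order all_algebra.
From mathcomp Require Import complex.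
From mathcomp Require Import all_classical all_reals all_analysis.
Import Order.TTheory GRing.Theory Num.Theory.
Import numFieldNormedType.Exports.
Local Open Scope ring_scope.
Local Open Scope complex_scope.
Local Open Scope classical_set_scope.

(* The coordinate functions have constant Jacobian: d_rho x^mu = delta_rho^mu.
   Contracting the first-order term of the deformed product against these
   Kronecker deltas leaves Theta^{mu nu}(x1, x2), and the antisymmetry of
   Theta makes the two orderings of the commutator add up instead of cancel. *)

Lemma derive_mx_coord (R : numFieldType) m n (i : 'I_m) (j : 'I_n)
    (v x : 'M[R]_(m, n)) :
  'D_v (fun y : 'M[R]_(m, n) => y i j) x = v i j.
Proof.
apply: cvg_lim => //; apply: cvg_near_cst; near=> h.
have h_neq0 : h != 0 by near: h; exact: nbhs_dnbhs_neq.
by rewrite /= !mxE addrK -[_ *: _]/(_ * _) mulKf.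
Unshelve. all: by end_near.
Qed.

Lemma pd_xcoord (R : realType) (rho mu : 'I_4) (x : 'rV[R]_4) :
  pd rho (xcoord mu) x = (rho == mu)%:R.
Proof. by rewrite /pd /xcoord derive_mx_coord mxE eqxx eq_sym. Qed.

Lemma sumr_mul_delta (R : pzSemiRingType) (I : finType) (F : I -> R) (j : I) :
  \sum_i F i * (i == j)%:R = F j.
Proof.
rewrite (bigD1 j) //= eqxx mulr1 big1 ?addr0 // => i /negbTE->.
by rewrite mulr0.
Qed.

Section CoordinateProduct.
Context {R : realType} {k : nat} {E : 'rV[R]_4 -> 'rV[R]_(4 + k)}
  {phi : 'rV[R]_4 -> 'rV[R]_4} {Th : 'M[R]_4}.

Lemma Theta2_swap (mu nu : 'I_4) (x1 x2 : 'rV[R]_4) :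
  Th^T = - Th -> Theta2 E phi Th nu mu x2 x1 = - Theta2 E phi Th mu nu x1 x2.
Proof.
move=> Th_skew; rewrite /Theta2 exchange_big -sumrN; apply: eq_bigr => a _.
rewrite -sumrN; apply: eq_bigr => b _.
have -> : Th b a = - Th a b.
  by move/matrixP: Th_skew => /(_ a b); rewrite !mxE.
by rewrite mulrAC !mulNr.
Qed.

Lemma star1_xcoord (mu nu : 'I_4) (x1 x2 : 'rV[R]_4) :
  star1 E phi Th (xcoord mu) (xcoord nu) x1 x2
  = (x1 0 mu * x2 0 nu)%:C + 'i * (Theta2 E phi Th mu nu x1 x2)%:C.
Proof.
rewrite /star1; congr (_ + 'i * _%:C).
under eq_bigr => rho _ do under eq_bigr => sigma _ do rewrite !pd_xcoord.
under eq_bigr => rho _ do rewrite sumr_mul_delta.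
exact: sumr_mul_delta.
Qed.

End CoordinateProduct.

Theorem mainTheorem5 (R : realType) (k : nat)
  (U : set 'rV[R]_4) (E : 'rV[R]_4 -> 'rV[R]_(4 + k))
  (phi : 'rV[R]_4 -> 'rV[R]_4) (g : 'rV[R]_4 -> 'M[R]_4) (Th : 'M[R]_4) :
  open U ->
  (* smooth (here: differentiable) embedding on the chart domain *)
  (forall x, U x -> differentiable E x) ->
  (* isometric: g is the pull-back of the Minkowski metric *)
  (forall x, U x -> g x = pullback_metric E x) ->
  (* g is a Lorentzian (nondegenerate, symmetric) metric on U *)
  (forall x, U x -> (g x)^T = g x /\ \det (g x) < 0) ->
  (* locally, x = x(X^mu): phi inverts X^mu(x) on U and is differentiable *)
  (forall x, U x -> phi (Xpt E x) = x) ->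
  (forall x, U x -> differentiable phi (Xpt E x)) ->
  (* Theta real constant skew-symmetric *)
  Th^T = - Th ->
  forall x, U x -> forall mu nu : 'I_4,
    comm1 E phi Th (xcoord mu) (xcoord nu) x
    = (2 : R[i]) * 'i * (Theta2 E phi Th mu nu x x)%:C.
Proof.
move=> _ _ _ _ _ _ Th_skew x _ mu nu.
rewrite /comm1 !star1_xcoord (Theta2_swap mu nu x x Th_skew) rmorphN mulrN.
by rewrite mulrC opprD opprK addrACA subrr add0r -mulrA mulr_natl mulr2n.
Qed.
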